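(* Let $n\ge 3$, let $d_1,\dots,d_{n-1}>0$, and let $k_1,\dots,k_{n-1}$ be real gains with $k_1+1>k_2$, $k_i>k_{i+1}$ for $i=2,\ldots,n-2$, and $k_{n-1}>0$. Define $f:\mathbb{R}^{n-1}\to\mathbb{R}^{n-1}$, writing $s_i(z)=\mathrm{sgn}(z_i)\,\mathrm{sgn}(|z_i|-d_i)$, by $$f_1(z)=-(k_1+1)s_1(z)+k_2 s_2(z),$$ $$f_i(z)=s_{i-1}(z)-(k_i+1)s_i(z)+k_{i+1}s_{i+1}(z),\quad i=2,\ldots,n-2,$$ $$f_{n-1}(z)=s_{n-2}(z)-(k_{n-1}+1)s_{n-1}(z).$$ Let $i\in\{2,\ldots,n-2\}$ and $z\in\mathbb{R}^{n-1}$. If $|z_j|\,\big||z_j|-d_j\big|=0$ for $j=1,\ldots,i-1$ and $\mathbf{0}\in\mathcal{K}(f(z))$, then $|z_i|\,\big||z_i|-d_i\big|=0$.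
   Context: The sign function is $\mathrm{sgn}(z)=+1$ if $z\ge 0$ and $\mathrm{sgn}(z)=-1$ if $z<0$. For a (possibly discontinuous) vector field $f$, $\mathcal{K}(f(z))=\bigcap_{\delta>0}\overline{\mathrm{co}}\,(f(B(z,\delta)))$, where $\overline{\mathrm{co}}$ denotes the closed convex hull and $B(z,\delta)$ the open ball of radius $\delta$ centered at $z$. *)

From HB Require Import structures.
From mathcomp Require Import all_boot all_order all_algebra.
From mathcomp Require Import all_classical all_reals all_analysis.
Set Implicit Arguments. Unset Strict Implicit. Unset Printing Implicit Defensive.
Import Order.TTheory GRing.Theory Num.Theory.
Import numFieldNormedType.Exports.
Local Open Scope classical_set_scope.
Local Open Scope ring_scope.

Definition sgn {R : realType} (x : R) : R := if 0 <= x then 1 else -1.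

Definition conv_hull {R : realType} (m : nat) (A : set 'rV[R]_m) : set 'rV[R]_m :=
  [set x | exists (p : nat) (w : 'I_p -> R) (a : 'I_p -> 'rV[R]_m),
     (forall i, 0 <= w i) /\ \sum_(i < p) w i = 1 /\ (forall i, A (a i)) /\
     x = \sum_(i < p) w i *: a i].

Definition cl_conv_hull {R : realType} (m : nat) (A : set 'rV[R]_m) : set 'rV[R]_m :=
  closure (conv_hull A).

Definition eball {R : realType} (m : nat) (z : 'rV[R]_m) (delta : R) : set 'rV[R]_m :=
  [set y | \sum_(i < m) (y ord0 i - z ord0 i) ^+ 2 < delta ^+ 2].

Definition Filippov {R : realType} (m : nat) (f : 'rV[R]_m -> 'rV[R]_m)
  (z : 'rV[R]_m) : set 'rV[R]_m :=
  \bigcap_(delta in [set delta : R | 0 < delta]) cl_conv_hull (f @` eball z delta).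

(* 1-based coordinate z_j of z in R^m (j = 1..m); 0 outside the range *)
Definition coord1 {R : realType} (m : nat) (z : 'rV[R]_m) (j : nat) : R :=
  if (0 < j)%N then
    (if @insub nat (fun k => (k < m)%N) 'I_m j.-1 is Some i then z ord0 i else 0)
  else 0.

Definition s_fun {R : realType} (m : nat) (d : nat -> R) (z : 'rV[R]_m) (j : nat) : R :=
  sgn (coord1 z j) * sgn (`|coord1 z j| - d j).

Definition f_comp {R : realType} (m : nat) (d k : nat -> R) (z : 'rV[R]_m) (j : nat) : R :=
  (if (1 < j)%N then s_fun d z j.-1 else 0)
  - (k j + 1) * s_fun d z j
  + (if (j < m)%N then k j.+1 * s_fun d z j.+1 else 0).

Definition f_vec {R : realType} (m : nat) (d k : nat -> R) (z : 'rV[R]_m) : 'rV[R]_m :=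
  \row_(i < m) f_comp d k z i.+1.

From HB Require Import structures.
From mathcomp Require Import all_boot all_order all_algebra.
From mathcomp Require Import all_classical all_reals all_analysis.
From mathcomp Require Import ring lra zify.
Import Order.TTheory GRing.Theory Num.Theory.
Import numFieldNormedType.Exports.
Local Open Scope classical_set_scope.
Local Open Scope ring_scope.

(* Gaussian elimination along the tridiagonal chain: with the pivots
   p_1 = k_1 + 1 and p_{j+1} = k_{j+1} + 1 - k_{j+1} / p_j, the linear form
   E_j(v) = v_j + E_{j-1}(v) / p_{j-1} satisfies
   E_j(f(y)) = - p_j s_j(y) + k_{j+1} s_{j+1}(y).  The gain conditions give
   p_j > k_{j+1} > 0 for j <= n-2.  If z_i is neither 0 nor +-d_i, then s_i is
   constant near z, so s_i(z) E_i(f(y)) <= k_{i+1} - p_i < 0 on a ball around z;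
   this strict linear inequality survives convex combinations and closure,
   so 0 is not in K(f(z)).  Neither the hypothesis on z_1, ..., z_{i-1} nor the
   positivity of the d_j is needed. *)

Section Coordinates.
Context {R : realType} {m : nat}.
Implicit Types (u v : 'rV[R]_m).

Lemma coord1E v j (Hj : (j.-1 < m)%N) : (0 < j)%N -> coord1 v j = v ord0 (Ordinal Hj).
Proof.
move=> j_gt0; rewrite /coord1 j_gt0; case: insubP => [i _ Hi|]; last by rewrite Hj.
by congr (v ord0 _); apply: val_inj.
Qed.

Lemma coord1_linear (c : R) u v j : coord1 (c *: u + v) j = c * coord1 u j + coord1 v j.
Proof.
rewrite /coord1; case: (0 < j)%N; last by rewrite mulr0 addr0.
by case: insub => [i|]; rewrite ?mxE ?mulr0 ?addr0.
Qed.

Lemma coord1_continuous j : continuous (fun v => coord1 v j).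
Proof.
rewrite /coord1; case: (0 < j)%N; last exact: cst_continuous.
case: insub => [i|]; [exact: coord_continuous | exact: cst_continuous].
Qed.

Lemma coord1_f_vec (d k : nat -> R) v j : (1 <= j <= m)%N ->
  coord1 (f_vec d k v) j = f_comp d k v j.
Proof.
case: j => [//|j] /= jm.
by rewrite (coord1E _ j.+1 jm) // mxE.
Qed.

Lemma eball_coord1 j {z y : 'rV[R]_m} {e : R} : 0 < e -> eball z e y ->
  `|coord1 y j - coord1 z j| < e.
Proof.
move=> e_gt0; rewrite /eball /= /coord1.
case: (0 < j)%N; last by rewrite subr0 normr0.
case: insub => [i|]; last by rewrite subr0 normr0.
rewrite (bigD1 i) //= => yz_lt.
rewrite -(ltr_pXn2r (n := 2)) ?nnegrE ?(ltW e_gt0) // real_normK ?num_real //.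
by apply: le_lt_trans yz_lt; rewrite lerDl sumr_ge0 // => l _; rewrite sqr_ge0.
Qed.

End Coordinates.

Section ConvexSeparation.
Context {R : realType} {m : nat} {g : 'rV[R]_m -> R}.
Hypothesis g_linear : forall (c : R) u v, g (c *: u + v) = c * g u + g v.

Lemma linear_g0 : g 0 = 0.
Proof. by have := g_linear (-1) 0 0; rewrite scaler0 addr0 mulN1r addNr. Qed.

Lemma linear_g_sum p (w : 'I_p -> R) (a : 'I_p -> 'rV[R]_m) :
  g (\sum_(l < p) w l *: a l) = \sum_(l < p) w l * g (a l).
Proof.
elim: p w a => [|p IH] w a; first by rewrite !big_ord0 linear_g0.
by rewrite !big_ord_recr /= addrC g_linear IH addrC.
Qed.

Lemma conv_hull_le (A : set 'rV[R]_m) r : (forall a, A a -> g a <= r) ->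
  conv_hull A `<=` [set x | g x <= r].
Proof.
move=> gA _ [p [w [a [w_ge0 [w_sum1 [Aa ->]]]]]] /=.
rewrite linear_g_sum -[r]mul1r -w_sum1 mulr_suml.
by apply: ler_sum => l _; rewrite ler_wpM2l // gA.
Qed.

Hypothesis g_continuous : continuous g.

Lemma cl_conv_hull_le (A : set 'rV[R]_m) r : (forall a, A a -> g a <= r) ->
  cl_conv_hull A `<=` [set x | g x <= r].
Proof.
move=> gA x cl_x.
have closed_le_g : closed (g @^-1` [set t | t <= r]).
  by apply: preimage_closed; [move=> y _; exact: g_continuous | exact: closed_le].
by apply: closed_le_g; apply: closureS cl_x; exact: conv_hull_le.
Qed.

Lemma Filippov_le {f : 'rV[R]_m -> 'rV[R]_m} {z} {delta r : R} : 0 < delta ->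
  (forall y, eball z delta y -> g (f y) <= r) -> Filippov f z `<=` [set x | g x <= r].
Proof.
move=> delta_gt0 gf x Kx; apply: (@cl_conv_hull_le (f @` eball z delta)).
  by move=> _ [y zy <-]; exact: gf.
exact: Kx.
Qed.

End ConvexSeparation.

Section Elimination.
Context {R : realType} (k : nat -> R).

(* [pivot 1 = k 1 + 1] because division by [pivot 0 = 0] yields 0. *)
Fixpoint pivot (j : nat) : R :=
  if j is j'.+1 then k j'.+1 + 1 - k j'.+1 / pivot j' else 0.

Fixpoint elim_coord {m : nat} (v : 'rV[R]_m) (j : nat) : R :=
  if j is j'.+1 then coord1 v j'.+1 + elim_coord v j' / pivot j' else 0.

Lemma elim_coord_linear m (c : R) (u v : 'rV[R]_m) j :
  elim_coord (c *: u + v) j = c * elim_coord u j + elim_coord v j.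
Proof. by elim: j => [|j IH] /=; [rewrite mulr0 addr0 | rewrite coord1_linear IH; ring]. Qed.

Lemma elim_coord_continuous m j : continuous (fun v : 'rV[R]_m => elim_coord v j).
Proof.
elim: j => [|j IH] /=; first exact: cst_continuous.
move=> x; apply: (continuousD (f := fun v => coord1 v j.+1)).
  exact: coord1_continuous.
by apply: (continuousM (t := fun=> (pivot j)^-1)); [exact: IH | exact: cst_continuous].
Qed.

Lemma elim_coord_f_vec (d : nat -> R) m (y : 'rV[R]_m) j : (1 <= j < m)%N ->
  (forall l, (1 <= l < j)%N -> pivot l != 0) ->
  elim_coord (f_vec d k y) j = - pivot j * s_fun d y j + k j.+1 * s_fun d y j.+1.
Proof.
elim: j => [//|j IH] /andP[_ jm] piv_neq0 /=.
rewrite coord1_f_vec /f_comp ?jm; last by rewrite /= ltnW.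
case: j IH jm piv_neq0 => [|j] IH jm piv_neq0.
  by rewrite /= invr0 !mulr0 subr0 addr0 sub0r; ring.
rewrite IH; last 2 first.
- by rewrite /= (ltn_trans _ jm).
- by move=> l /andP[l_ge1 lj]; apply: piv_neq0; rewrite l_ge1 ltnS ltnW.
have -> : (1 < j.+2)%N by [].
have : pivot j.+1 != 0 by apply: piv_neq0; rewrite ltnSn.
by move: (pivot j.+1) => p p_neq0; field.
Qed.

Lemma pivot_gt_gain b : k 2 < k 1 + 1 ->
  (forall j, (2 <= j <= b)%N -> k j.+1 < k j) ->
  (forall j, (2 <= j <= b.+1)%N -> 0 < k j) ->
  forall j, (1 <= j <= b)%N -> k j.+1 < pivot j.
Proof.
move=> k12 k_decr k_gt0; elim => [//|[|j] IH] /andP[_ jb] /=.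
  by rewrite invr0 mulr0 subr0.
have kj_gt0 : 0 < k j.+2 by apply: k_gt0; lia.
have piv_gt : k j.+2 < pivot j.+1 by apply: IH; lia.
have ratio_lt1 : k j.+2 / pivot j.+1 < 1 by rewrite ltr_pdivrMr ?mul1r //; lra.
have := k_decr j.+2 ltac:(lia); lra.
Qed.

End Elimination.

Lemma pos_of_decreasing (R : realType) (u : nat -> R) a b :
  (forall j, (a <= j < b)%N -> u j.+1 < u j) -> 0 < u b ->
  forall j, (a <= j <= b)%N -> 0 < u j.
Proof.
move=> u_decr ub_gt0 j /andP[aj jb]; rewrite -(subKn jb).
have : (b - j <= b - a)%N by lia.
elim: (b - j)%N => [|t IH] t_le; first by rewrite subn0.
have := u_decr (b - t.+1)%N ltac:(lia).
have -> : ((b - t.+1).+1 = b - t)%N by lia.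
have := IH ltac:(lia); lra.
Qed.

Lemma sgn_eq_near {R : realType} {a b : R} : a != 0 -> `|b - a| < `|a| -> sgn b = sgn a.
Proof.
rewrite /sgn => a_neq0; rewrite ltr_norml.
case: (ltrgtP 0 a) => [a_gt0|a_lt0|a0]; last by rewrite a0 eqxx in a_neq0.
- by rewrite gtr0_norm // => /andP[ba _]; rewrite ifT //; lra.
- by rewrite ltr0_norm // => /andP[_ ba]; rewrite ifF //; apply/negbTE; rewrite -ltNge; lra.
Qed.

Section Switches.
Context {R : realType} {m : nat} (d : nat -> R).

Lemma s_fun_pm1 (y : 'rV[R]_m) j : s_fun d y j = 1 \/ s_fun d y j = -1.
Proof.
by rewrite /s_fun /sgn; do 2 case: (0 <= _);
  rewrite ?mulr1 ?mulrN1 ?opprK; [left|right|right|left].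
Qed.

Lemma s_fun_eq_near {z y : 'rV[R]_m} {j : nat} : coord1 z j != 0 -> `|coord1 z j| != d j ->
  `|coord1 y j - coord1 z j| < Num.min `|coord1 z j| `| `|coord1 z j| - d j| ->
  s_fun d y j = s_fun d z j.
Proof.
move=> zj_neq0 zj_neqd; rewrite lt_min => /andP[near_z near_d].
rewrite /s_fun (sgn_eq_near zj_neq0 near_z); congr (_ * _).
apply: sgn_eq_near; first by rewrite subr_eq0.
rewrite opprB addrA subrK; exact: le_lt_trans (ler_dist_dist _ _) near_d.
Qed.

Lemma s_fun_elim_coord_f_vec_le (k : nat -> R) (y : 'rV[R]_m) j : (1 <= j < m)%N ->
  (forall l, (1 <= l < j)%N -> pivot k l != 0) -> 0 < k j.+1 ->
  s_fun d y j * elim_coord k (f_vec d k y) j <= - (pivot k j - k j.+1).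
Proof.
move=> jm piv_neq0 k_gt0; rewrite elim_coord_f_vec //.
by case: (s_fun_pm1 y j) => ->; case: (s_fun_pm1 y j.+1) => ->; lra.
Qed.

End Switches.

Theorem lemma1 (R : realType) (n : nat) (d k : nat -> R) :
  (3 <= n)%N ->
  (forall j, (1 <= j <= n.-1)%N -> 0 < d j) ->
  k 2%N < k 1%N + 1 ->
  (forall i, (2 <= i <= n - 2)%N -> k i.+1 < k i) ->
  0 < k n.-1 ->
  forall (i : nat), (2 <= i <= n - 2)%N ->
  forall (z : 'rV[R]_n.-1),
    (forall j, (1 <= j <= i.-1)%N -> `|coord1 z j| * `| `|coord1 z j| - d j | = 0) ->
    Filippov (f_vec d k) z 0 ->
    `|coord1 z i| * `| `|coord1 z i| - d i | = 0.
Proof.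
move=> n_ge3 _ k12 k_decr k_last i /andP[i_ge2 i_le] z _ Kz0.
apply/eqP; apply/negPn/negP; rewrite mulf_eq0 negb_or !normr_eq0 subr_eq0.
move=> /andP[zi_neq0 zi_neqd].
have k_gt0 : forall j, (2 <= j <= (n - 2).+1)%N -> 0 < k j.
  move=> j j_range; apply: (@pos_of_decreasing _ k 2 n.-1) => //; last by lia.
  by move=> l l_range; apply: k_decr; lia.
have piv_gt := @pivot_gt_gain _ k _ k12 k_decr k_gt0.
have piv_neq0 l : (1 <= l < i)%N -> pivot k l != 0.
  by move=> l_range; rewrite gt_eqF // (lt_trans _ (piv_gt l _)) ?k_gt0 //; lia.
set delta := Num.min `|coord1 z i| `| `|coord1 z i| - d i|.
have delta_gt0 : 0 < delta by rewrite lt_min !normr_gt0 zi_neq0 subr_eq0 zi_neqd.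
pose g (v : 'rV[R]_n.-1) := s_fun d z i * elim_coord k v i.
have g_linear (c : R) (u v : 'rV[R]_n.-1) : g (c *: u + v) = c * g u + g v.
  by rewrite /g elim_coord_linear; ring.
have g_continuous : continuous g.
  move=> x; apply: (continuousM (s := fun=> _) (t := elim_coord k ^~ i)).
  - exact: cst_continuous.
  - exact: elim_coord_continuous.
have gf_le y : eball z delta y -> g (f_vec d k y) <= - (pivot k i - k i.+1).
  move=> zy; rewrite /g -(s_fun_eq_near d zi_neq0 zi_neqd (eball_coord1 i delta_gt0 zy)).
  by apply: s_fun_elim_coord_f_vec_le; rewrite ?k_gt0 //; lia.
have := Filippov_le g_linear g_continuous delta_gt0 gf_le 0 Kz0.
rewrite /= (linear_g0 g_linear).
have := piv_gt i ltac:(lia); lra.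
Qed.
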